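(* Consider a coalition $\mathcal{S}_l$ (a finite nonempty set of devices) associated with edge server $l$, with parameters $\rho_l>0$, $\xi>0$, $x_l\in\mathbb{R}$, $\alpha_l>0$, a positive integer $K_l$ of edge aggregations, a global aggregation interval $T^{\text{cloud}}>0$, bandwidth $B_l>0$, model size $s>0$, noise power $\sigma^2>0$, and for each device $i\in\mathcal{S}_l$ a transmit power $P_i>0$, channel gain $h_{i,l}>0$, CPU frequency $f_i>0$ and CPU cycles per data unit $C_i>0$. Set $R_i=\frac{B_l}{|\mathcal{S}_l|}\log\!\big(1+\frac{P_ih_{i,l}}{\sigma^2}\big)$ and assume $\frac{s}{R_i}\le \frac{T^{\text{cloud}}}{K_l}$ for all $i\in\mathcal{S}_l$, with strict inequality for at least one $i$. Consider the noncooperative game in which each device $i\in\mathcal{S}_l$ chooses an amount of local training data $D_i\ge 0$ subject to the delay constraint $\frac{D_iC_i}{f_i}+\frac{s}{R_i}\le \frac{T^{\text{cloud}}}{K_l}$, and receives utility $$u_i(D)=\rho_l\xi\sqrt{K_l\sum_{j\in\mathcal{S}_l}D_j}\;\frac{D_i}{\sum_{j\in\mathcal{S}_l}D_j}+x_l-\alpha_l\Big(\sum_{j\in\mathcal{S}_l}R_j\Big)^2$$ (the first term being interpreted as $0$ when $\sum_j D_j=0$). Then the profile $D^*=(D_i^* )_{i\in\mathcal{S}_l}$ with $$D_i^*=\Big(\frac{T^{\text{cloud}}}{K_l}-\frac{s}{R_i}\Big)\frac{f_i}{C_i}=\Big(\frac{T^{\text{cloud}}}{K_l}-\frac{s|\mathcal{S}_l|}{B_l\log(1+\frac{P_ih_{i,l}}{\sigma^2})}\Big)\frac{f_i}{C_i}$$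 is a Nash equilibrium of this game.
   Context: This models the devices of one coalition in hierarchical federated learning: each device is rewarded with a share, proportional to its data contribution, of the coalition's training revenue $\rho_l\xi\sqrt{K_l\sum_j D_j}$, plus a fixed reward $x_l$, minus a congestion cost depending on the coalition's total uplink rate. A Nash equilibrium is a feasible profile from which no device can increase its utility by unilaterally changing its own feasible choice $D_i$. *)

From mathcomp Require Import all_boot all_order all_algebra.
From mathcomp Require Import all_classical all_reals all_analysis.
Set Implicit Arguments. Unset Strict Implicit. Unset Printing Implicit Defensive.
Import Order.TTheory GRing.Theory Num.Theory.
Local Open Scope ring_scope.

Definition rate (R : realType) (S : finType) (B sigma2 : R) (P h : S -> R) (i : S) : R :=
  B / #|S|%:R * ln (1 + P i * h i / sigma2).

Definition utility (R : realType) (S : finType)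
  (rho xi x alpha : R) (K : nat) (Rt : S -> R) (D : S -> R) (i : S) : R :=
  let tot := \sum_(j : S) D j in
  (if tot == 0 then 0 else rho * xi * Num.sqrt (K%:R * tot) * (D i / tot))
  + x - alpha * (\sum_(j : S) Rt j) ^+ 2.

Definition feasible_choice (R : realType) (S : finType)
  (T s : R) (K : nat) (C f Rt : S -> R) (i : S) (d : R) : Prop :=
  0 <= d /\ d * C i / f i + s / Rt i <= T / K%:R.

Definition deviate (R : realType) (S : finType) (D : S -> R) (i : S) (d : R) : S -> R :=
  fun j => if j == i then d else D j.

Definition is_nash (R : realType) (S : finType)
  (feas : S -> R -> Prop) (u : (S -> R) -> S -> R) (D : S -> R) : Prop :=
  (forall i, feas i (D i)) /\
  (forall i d, feas i d -> u (deviate D i d) i <= u D i).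

From mathcomp Require Import all_boot all_order all_algebra.
From mathcomp Require Import all_classical all_reals all_analysis.
From mathcomp Require Import ring lra.
Import Order.TTheory GRing.Theory Num.Theory.
Local Open Scope ring_scope.

(* Writing A for the other devices' total, device i's revenue share is
   rho xi sqrt K * D_i / sqrt (D_i + A), which is nondecreasing in D_i, while the
   congestion term does not depend on the data amounts at all.  So the best
   response of every device is the largest feasible D_i, i.e. the one that makes
   its delay constraint tight, and that is exactly D_i^*. *)

Section RevenueShare.
Variable R : rcfType.

Lemma ler_div_sqrtD (A d e : R) : 0 <= A -> 0 <= d <= e -> 0 < d + A ->
  d / Num.sqrt (d + A) <= e / Num.sqrt (e + A).
Proof.
move=> A_ge0 /andP[d_ge0 le_de] dA_gt0.
have eA_gt0 : 0 < e + A by lra.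
have mul_sqrtE (a b : R) : 0 <= a -> a * Num.sqrt b = Num.sqrt (a ^+ 2 * b).
  by move=> a_ge0; rewrite sqrtrM ?sqr_ge0 // sqrtr_sqr ger0_norm.
rewrite ler_pdivrMr ?sqrtr_gt0 // mulrAC ler_pdivlMr ?sqrtr_gt0 //.
rewrite !mul_sqrtE ?(le_trans d_ge0) // ler_sqrt; last by rewrite mulr_ge0 ?sqr_ge0 ?ltW.
have ede_ge0 : 0 <= d * e * (e - d) by rewrite !mulr_ge0 //; lra.
have Aee_ge0 : 0 <= A * ((e - d) * (e + d)) by rewrite !mulr_ge0 //; lra.
lra.
Qed.

Lemma sqrtM_mul_div (k t d : R) : 0 <= k -> 0 < t ->
  Num.sqrt (k * t) * (d / t) = Num.sqrt k * (d / Num.sqrt t).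
Proof.
move=> k_ge0 t_gt0; rewrite sqrtrM //.
have sqrt_t_neq0 : Num.sqrt t != 0 by rewrite gt_eqF ?sqrtr_gt0.
rewrite -{2}[t]sqr_sqrtr ?ltW //; field; exact: sqrt_t_neq0.
Qed.

Lemma revenue_share_le (c k A d e : R) : 0 <= c -> 0 <= k -> 0 <= A -> 0 <= d <= e ->
  (if d + A == 0 then 0 else c * Num.sqrt (k * (d + A)) * (d / (d + A))) <=
  (if e + A == 0 then 0 else c * Num.sqrt (k * (e + A)) * (e / (e + A))).
Proof.
move=> c_ge0 k_ge0 A_ge0 /andP[d_ge0 le_de].
have eA_ge0 : 0 <= e + A by lra.
have share_e_ge0 : 0 <= (if e + A == 0 then 0
                         else c * Num.sqrt (k * (e + A)) * (e / (e + A))).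
  case: ifP => // _; rewrite !mulr_ge0 ?sqrtr_ge0 ?invr_ge0 //; lra.
have [//|dA_neq0] := eqVneq (d + A) 0.
have dA_gt0 : 0 < d + A by rewrite lt_neqAle eq_sym dA_neq0 addr_ge0.
have eA_gt0 : 0 < e + A by lra.
rewrite gt_eqF // -!mulrA !sqrtM_mul_div //.
by rewrite ler_wpM2l // ler_wpM2l ?sqrtr_ge0 // ler_div_sqrtD ?d_ge0.
Qed.

End RevenueShare.

Section Deviation.
Variables (R : realType) (S : finType).

Lemma sum_deviate (D : S -> R) (i : S) (d : R) :
  \sum_j deviate D i d j = d + \sum_(j | j != i) D j.
Proof.
rewrite (bigD1 i) //= /deviate eqxx; congr (_ + _).
by apply: eq_bigr => j /negbTE ->.
Qed.

Lemma utility_deviate_le (rho xi x alpha : R) (K : nat) (Rt D : S -> R) (i : S) (d : R) :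
  0 <= rho * xi -> (forall j, 0 <= D j) -> 0 <= d <= D i ->
  utility rho xi x alpha K Rt (deviate D i d) i <= utility rho xi x alpha K Rt D i.
Proof.
move=> rx_ge0 D_ge0 d_range.
rewrite /utility [\sum_j D j](bigD1 i) //= sum_deviate /deviate eqxx.
rewrite lerD2r lerD2r; apply: revenue_share_le => //.
by apply: sumr_ge0.
Qed.

Lemma feasible_choiceE (T s : R) (K : nat) (C f Rt : S -> R) (i : S) (d : R) :
  0 < f i -> 0 < C i ->
  feasible_choice T s K C f Rt i d <-> 0 <= d <= (T / K%:R - s / Rt i) * (f i / C i).
Proof.
move=> f_gt0 C_gt0; rewrite /feasible_choice -lerBrDr.
rewrite ler_pdivrMr // -ler_pdivlMr // mulrA.
by split => [[-> ->] | /andP[-> ->]].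
Qed.

End Deviation.

Theorem theorem1 (R : realType) (S : finType)
  (rho xi x alpha T B s sigma2 : R) (K : nat)
  (P h f C : S -> R)
  (hS : (0 < #|S|)%N)
  (hrho : 0 < rho) (hxi : 0 < xi) (halpha : 0 < alpha) (hK : (0 < K)%N)
  (hT : 0 < T) (hB : 0 < B) (hs : 0 < s) (hsigma : 0 < sigma2)
  (hP : forall i, 0 < P i) (hh : forall i, 0 < h i)
  (hf : forall i, 0 < f i) (hC : forall i, 0 < C i)
  (hdelay : forall i, s / rate B sigma2 P h i <= T / K%:R)
  (hstrict : exists i, s / rate B sigma2 P h i < T / K%:R) :
  let Rt := rate B sigma2 P h in
  is_nash (feasible_choice T s K C f Rt)
    (utility rho xi x alpha K Rt)
    (fun i => (T / K%:R - s / Rt i) * (f i / C i)).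
Proof.
move=> Rt; set Dstar := fun i => _.
have Dstar_ge0 i : 0 <= Dstar i.
  by rewrite mulr_ge0 ?subr_ge0 ?hdelay // divr_ge0 // ltW.
have rho_xi_ge0 : 0 <= rho * xi by rewrite mulr_ge0 // ltW.
split=> [i | i d]; rewrite feasible_choiceE //; first by rewrite Dstar_ge0 lexx.
by move=> d_range; apply: utility_deviate_le.
Qed.
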